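(* Let $T=(T_{i,j})_{i,j\in\mathbb{Z}}$ be a translation-invariant stochastic matrix on $\mathbb{Z}$ that is strictly finite-ranged: there are nonnegative integers $l_1,l_2$ with $T_{j-l,j}=0$ for $l>l_1$, $T_{j+l,j}=0$ for $l>l_2$, $T_{j-l_1,j}\ne0$, $T_{j+l_2,j}\ne0$. Let $\xi(k)=\sum_lT_{j+l,j}e^{-ikl}$ and assume $\xi(k)\ne0$ for all $k\in[-\pi,\pi]$. If $$T_{j-l_1,j}\ge T_{j-l_1+1,j}\ge\cdots\ge T_{j+l_2,j}\ (\ge0),$$ then $w(T,0)=l_1$. In particular, if $T_{j+l,j}=0$ for all $l<0$ and $T_{j,j}\ge T_{j+1,j}\ge\cdots\ge T_{j+l_2,j}$, then $w(T,0)=0$.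
   Context: A stochastic matrix on $\mathbb{Z}$ is a real matrix $(T_{i,j})$ with $T_{i,j}\ge0$ and $\sum_iT_{i,j}=1$ for each $j$; it is translation invariant if $T_{i+1,j+1}=T_{i,j}$ (so $T_{j+l,j}$ is independent of $j$). The winding number is $w(T,0)=\int_{-\pi}^{\pi}\frac{dk}{2\pi i}\partial_k\log\xi(k)\in\mathbb{Z}$. *)

From Stdlib Require Import Reals ZArith.
From Coquelicot Require Import Coquelicot.
Open Scope R_scope.

(* A real matrix on Z is a function T : Z -> Z -> R, T i j = T_{i,j}. *)

(* Stochastic: nonnegative entries, every column sums to 1
   (the sum over i in Z split as i = j + n, n >= 0, and i = j - (n+1)). *)
Definition stochastic (T : Z -> Z -> R) : Prop :=
  (forall i j, 0 <= T i j) /\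
  (forall j, exists a b : R,
      is_series (fun n : nat => T (j + Z.of_nat n)%Z j) a /\
      is_series (fun n : nat => T (j - Z.of_nat (S n))%Z j) b /\
      a + b = 1).

Definition translation_invariant (T : Z -> Z -> R) : Prop :=
  forall i j, T (i + 1)%Z (j + 1)%Z = T i j.

Definition strictly_finite_ranged (T : Z -> Z -> R) (l1 l2 : nat) : Prop :=
  (forall j l, (Z.of_nat l1 < l)%Z -> T (j - l)%Z j = 0) /\
  (forall j l, (Z.of_nat l2 < l)%Z -> T (j + l)%Z j = 0) /\
  (forall j, T (j - Z.of_nat l1)%Z j <> 0) /\
  (forall j, T (j + Z.of_nat l2)%Z j <> 0).

Definition expi (x : R) : C := (cos x, sin x).

(* xi(k) = sum_l T_{j+l,j} e^{-ikl}; for a strictly finite-ranged, translation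
   invariant T, only l in [-l1, l2] contribute, and we take j = 0. *)
Definition xi (T : Z -> Z -> R) (l1 l2 : nat) (k : R) : C :=
  sum_n (fun n : nat =>
           let l := (Z.of_nat n - Z.of_nat l1)%Z in
           RtoC (T l 0%Z) * expi (- k * IZR l))%C (l1 + l2).

(* d/dk xi(k) = sum_l T_{j+l,j} (-i l) e^{-ikl} (termwise derivative). *)
Definition dxi (T : Z -> Z -> R) (l1 l2 : nat) (k : R) : C :=
  sum_n (fun n : nat =>
           let l := (Z.of_nat n - Z.of_nat l1)%Z in
           RtoC (T l 0%Z) * (- Ci * RtoC (IZR l)) * expi (- k * IZR l))%C (l1 + l2).

(* Winding number w(T,0) = int_{-pi}^{pi} dk/(2 pi i) d_k log xi(k)
   = (1/(2 pi i)) int_{-pi}^{pi} xi'(k)/xi(k) dk. *)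
Definition winding (T : Z -> Z -> R) (l1 l2 : nat) : C :=
  (@RInt C_R_CompleteNormedModule (fun k => dxi T l1 l2 k / xi T l1 l2 k)%C (- PI) PI
   / (RtoC (2 * PI) * Ci))%C.

From Stdlib Require Import Reals ZArith Lra Lia.
From Coquelicot Require Import Coquelicot.
Open Scope R_scope.

(* Put a_n = T_{n - l1, 0} and p(k) = Σ_{n ≤ l1 + l2} a_n e^{-ink}.  Then
   ξ(k) = e^{i l1 k} p(k), so ξ'/ξ = i l1 + p'/p and the winding number of ξ is l1 plus
   that of p.  When a_0 ≥ a_1 ≥ ... ≥ 0, the curve p never meets the closed negative
   real axis: if Im p(k) = 0, Abel summation gives
   (1 - cos k) Re p(k) = Σ a_n (cos nk - cos (n+1)k) ≥ 0, and Re p(0) = Σ a_n ≥ 0.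
   Hence the principal logarithm of p is a C¹ primitive of p'/p on [-π, π], and as
   p(-π) = p(π) the winding number of p vanishes.  If T_{j+l,j} = 0 for all l < 0,
   then l1 = 0 since T_{j-l1,j} ≠ 0. *)

Lemma expi_add x y : expi (x + y) = (expi x * expi y)%C.
Proof. unfold expi, Cmult; simpl; rewrite cos_plus, sin_plus; f_equal; ring. Qed.

Lemma sum_n_C (f : nat -> C) N :
  sum_n f N = (sum_n (fun n => Re (f n)) N, sum_n (fun n => Im (f n)) N).
Proof.
  induction N as [|N IH].
  - rewrite !sum_O. now destruct (f 0%nat).
  - rewrite !sum_Sn, IH. reflexivity.
Qed.

Lemma expi_neq0 x : expi x <> RtoC 0.
Proof.
  intros E. injection E as cos0 sin0. pose proof (sin2_cos2 x) as H.
  rewrite cos0, sin0 in H. unfold Rsqr in H. lra.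
Qed.

(* [tan (θ / 2) = Im z / (|z| + Re z)] for [z = |z| e^{iθ}]: this is the principal
   logarithm, smooth away from the closed negative real axis where [|z| + Re z = 0]. *)
Definition principal_log (z : C) : C := (ln (Cmod z), 2 * atan (Im z / (Cmod z + Re z))).

Lemma norm2_pos_of_Cmod_add_pos (u v : R) : 0 < Cmod (u, v) + u -> 0 < u ^ 2 + v ^ 2.
Proof.
  intros H. assert (E := Cmod2_alt (u, v)). unfold Re, Im in E. cbn [fst snd] in E.
  rewrite <- E. apply pow_lt, Cmod_gt_0. intros E0.
  rewrite E0, Cmod_0 in H. injection E0 as -> _. lra.
Qed.

Section PrincipalLogDerivative.

Variables (x y : R -> R) (t dx dy : R).
Hypotheses (x_deriv : is_derive x t dx) (y_deriv : is_derive y t dy).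

Let Dx : Derive (fun s => x s) t = dx.
Proof. now apply is_derive_unique. Qed.

Let Dy : Derive (fun s => y s) t = dy.
Proof. now apply is_derive_unique. Qed.

Lemma is_derive_Re_principal_log :
  0 < Cmod (x t, y t) + x t ->
  is_derive (fun s => Re (principal_log (x s, y s))) t (Re ((dx, dy) / (x t, y t))%C).
Proof.
  intros Hpos. assert (r2 := norm2_pos_of_Cmod_add_pos _ _ Hpos).
  assert (r_pos : 0 < sqrt (x t ^ 2 + y t ^ 2)) by now apply sqrt_lt_R0.
  unfold principal_log, Cmod, Cdiv, Cmult, Cinv; simpl.
  auto_derive; rewrite ?Dx, ?Dy;
    replace (x t * (x t * 1) + y t * (y t * 1)) with (x t ^ 2 + y t ^ 2) by ring.
  - repeat split; try easy; eexists; eassumption.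
  - assert (r_sq := sqrt_sqrt (x t ^ 2 + y t ^ 2) (Rlt_le _ _ r2)).
    revert r_pos r_sq. generalize (sqrt (x t ^ 2 + y t ^ 2)) as r. intros r r_pos <-.
    field. lra.
Qed.

Lemma is_derive_Im_principal_log :
  0 < Cmod (x t, y t) + x t ->
  is_derive (fun s => Im (principal_log (x s, y s))) t (Im ((dx, dy) / (x t, y t))%C).
Proof.
  intros Hpos. assert (r2 := norm2_pos_of_Cmod_add_pos _ _ Hpos).
  assert (r_pos : 0 < sqrt (x t ^ 2 + y t ^ 2)) by now apply sqrt_lt_R0.
  unfold principal_log, Cmod, Cdiv, Cmult, Cinv in *; simpl in *.
  auto_derive; rewrite ?Dx, ?Dy;
    replace (x t * (x t * 1) + y t * (y t * 1)) with (x t ^ 2 + y t ^ 2) in * by ring.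
  - repeat split; try easy; try (eexists; eassumption); lra.
  - assert (r_sq := sqrt_sqrt (x t ^ 2 + y t ^ 2) (Rlt_le _ _ r2)).
    revert Hpos r_pos r_sq. generalize (sqrt (x t ^ 2 + y t ^ 2)) as r.
    intros r Hpos r_pos r_sq.
    assert (sq_y : y t ^ 2 = r * r - x t ^ 2) by lra.
    field_simplify; [| nra | split; [lra | split; nra]].
    rewrite sq_y. replace (x t ^ 2 + (r * r - x t ^ 2)) with (r * r) by ring.
    field. split; nra.
Qed.

End PrincipalLogDerivative.

Lemma continuous_Rdiv_comp (f g : R -> R) t :
  continuous f t -> continuous g t -> g t <> 0 -> continuous (fun s => f s / g s) t.
Proof.
  intros f_cont g_cont g_ne0.
  apply (continuous_mult f (fun s => / g s)); [easy | now apply continuous_Rinv_comp].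
Qed.

Section LogDerivativeIntegral.

Variables (x y dx dy : R -> R) (a b : R).
Hypothesis x_deriv : forall t, Rmin a b <= t <= Rmax a b -> is_derive x t (dx t).
Hypothesis y_deriv : forall t, Rmin a b <= t <= Rmax a b -> is_derive y t (dy t).
Hypothesis dx_cont : forall t, Rmin a b <= t <= Rmax a b -> continuous dx t.
Hypothesis dy_cont : forall t, Rmin a b <= t <= Rmax a b -> continuous dy t.
Hypothesis off_negative_axis : forall t, Rmin a b <= t <= Rmax a b -> 0 < Cmod (x t, y t) + x t.

Let continuous_log_derivative_components t : Rmin a b <= t <= Rmax a b ->
  continuous (fun s => Re ((dx s, dy s) / (x s, y s))%C) t /\
  continuous (fun s => Im ((dx s, dy s) / (x s, y s))%C) t.
Proof.
  intros Ht.
  assert (x_cont : continuous x t) by (apply (ex_derive_continuous x); eexists; now apply x_deriv).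
  assert (y_cont : continuous y t) by (apply (ex_derive_continuous y); eexists; now apply y_deriv).
  assert (norm2_cont : continuous (fun s => x s * x s + y s * y s) t)
    by (apply (continuous_plus (fun s => x s * x s) (fun s => y s * y s));
        apply (continuous_mult (K := R_AbsRing)); easy).
  assert (norm2_ne0 : x t * x t + y t * y t <> 0).
  { assert (H := norm2_pos_of_Cmod_add_pos _ _ (off_negative_axis t Ht)). simpl in H. lra. }
  split.
  - apply (continuous_ext (fun s => (x s * dx s + y s * dy s) / (x s * x s + y s * y s))).
    { intros s. unfold Cdiv, Cmult, Cinv; cbn. unfold Rdiv. rewrite !Rmult_1_r. ring. }
    apply continuous_Rdiv_comp; [| easy | easy].
    apply (continuous_plus (fun s => x s * dx s) (fun s => y s * dy s));
      apply (continuous_mult (K := R_AbsRing)); auto.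
  - apply (continuous_ext (fun s => (x s * dy s - y s * dx s) / (x s * x s + y s * y s))).
    { intros s. unfold Cdiv, Cmult, Cinv; cbn. unfold Rdiv. rewrite !Rmult_1_r. ring. }
    apply continuous_Rdiv_comp; [| easy | easy].
    apply (continuous_minus (fun s => x s * dy s) (fun s => y s * dx s));
      apply (continuous_mult (K := R_AbsRing)); auto.
Qed.

Lemma is_RInt_log_derivative :
  @is_RInt C_R_CompleteNormedModule (fun t => ((dx t, dy t) / (x t, y t))%C) a b
    (principal_log (x b, y b) - principal_log (x a, y a))%C.
Proof.
  apply (is_RInt_fct_extend_pair (U := R_NormedModule) (V := R_NormedModule)).
  - apply (is_RInt_derive (fun t => Re (principal_log (x t, y t)))); intros t Ht.
    + apply is_derive_Re_principal_log; auto.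
    + now apply continuous_log_derivative_components.
  - apply (is_RInt_derive (fun t => Im (principal_log (x t, y t)))); intros t Ht.
    + apply is_derive_Im_principal_log; auto.
    + now apply continuous_log_derivative_components.
Qed.

End LogDerivativeIntegral.

Definition trig_re (a : nat -> R) (N : nat) (k : R) : R :=
  sum_n (fun n => a n * cos (- INR n * k)) N.

Definition trig_im (a : nat -> R) (N : nat) (k : R) : R :=
  sum_n (fun n => a n * sin (- INR n * k)) N.

Definition trig_poly (a : nat -> R) (N : nat) (k : R) : C := (trig_re a N k, trig_im a N k).

Definition trig_poly_deriv (a : nat -> R) (N : nat) (k : R) : C :=
  (trig_im (fun n => INR n * a n) N k, trig_re (fun n => - (INR n * a n)) N k).

Lemma is_derive_trig_re a N k :
  is_derive (trig_re a N) k (trig_im (fun n => INR n * a n) N k).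
Proof.
  apply (is_derive_sum_n (fun n t => a n * cos (- INR n * t))).
  intros n _. auto_derive; [easy | ring].
Qed.

Lemma is_derive_trig_im a N k :
  is_derive (trig_im a N) k (trig_re (fun n => - (INR n * a n)) N k).
Proof.
  apply (is_derive_sum_n (fun n t => a n * sin (- INR n * t))).
  intros n _. auto_derive; [easy | ring].
Qed.

Lemma continuous_trig_re a N k : continuous (trig_re a N) k.
Proof. apply (ex_derive_continuous (trig_re a N)). eexists. apply is_derive_trig_re. Qed.

Lemma continuous_trig_im a N k : continuous (trig_im a N) k.
Proof. apply (ex_derive_continuous (trig_im a N)). eexists. apply is_derive_trig_im. Qed.

Lemma trig_poly_periodic a N : trig_poly a N (- PI) = trig_poly a N PI.
Proof.
  unfold trig_poly, trig_re, trig_im. f_equal; apply sum_n_ext; intros n.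
  - now rewrite <- cos_neg, Ropp_mult_distr_r, Ropp_involutive. 
  - assert (sin_ZPI : forall z : Z, sin (IZR z * PI) = 0)
      by (intros z; apply sin_eq_0_1; now exists z).
    replace (- INR n * - PI) with (IZR (Z.of_nat n) * PI) by (rewrite <- INR_IZR_INZ; ring).
    replace (- INR n * PI) with (IZR (- Z.of_nat n) * PI)
      by (rewrite opp_IZR, <- INR_IZR_INZ; ring).
    now rewrite !sin_ZPI.
Qed.

Lemma abel_summation_lower_bound (a c : nat -> R) N :
  c 0%nat = 1 -> (forall n, c n <= 1) -> (forall n, 0 <= a n) ->
  (forall n, (n < N)%nat -> a (S n) <= a n) ->
  a N * (1 - c (S N)) <= sum_n (fun n => a n * (c n - c (S n))) N.
Proof.
  intros c0 c_le1 a_ge0. induction N as [|N IH]; intros a_decr.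
  - rewrite sum_O, c0. lra.
  - rewrite sum_Sn. unfold plus; simpl.
    assert (IH' := IH (fun n Hn => a_decr n ltac:(lia))).
    assert (decr_N := a_decr N ltac:(lia)).
    assert (c_le1' := c_le1 (S N)). assert (a_ge0' := a_ge0 (S N)).
    nra.
Qed.

Lemma trig_re_shift_diff a N k :
  sum_n (fun n => a n * (cos (- INR n * k) - cos (- INR (S n) * k))) N
  = (1 - cos k) * trig_re a N k - sin k * trig_im a N k.
Proof.
  unfold trig_re, trig_im. induction N as [|N IH].
  - rewrite !sum_O, INR_0, INR_1.
    replace (- 0 * k) with 0 by ring. replace (- (1) * k) with (- k) by ring.
    rewrite cos_0, sin_0, cos_neg. simpl; ring.
  - rewrite !sum_Sn, IH, (S_INR (S N)).
    replace (- (INR (S N) + 1) * k) with (- INR (S N) * k + - k) by ring.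
    rewrite cos_plus, cos_neg, sin_neg. unfold plus; simpl; ring.
Qed.

Lemma cos_eq_1_segment k : - PI <= k <= PI -> cos k = 1 -> k = 0.
Proof.
  intros Hk Hc. destruct (Rtotal_order k 0) as [Hlt | [Heq | Hgt]]; [exfalso | exact Heq | exfalso].
  - rewrite <- cos_neg in Hc. assert (cos (- k) < cos 0) by (apply cos_decreasing_1; lra).
    rewrite cos_0 in *. lra.
  - assert (cos k < cos 0) by (apply cos_decreasing_1; lra). rewrite cos_0 in *. lra.
Qed.

Lemma trig_re_nonneg_on_real_axis a N k :
  (forall n, 0 <= a n) -> (forall n, (n < N)%nat -> a (S n) <= a n) ->
  - PI <= k <= PI -> trig_im a N k = 0 -> 0 <= trig_re a N k.
Proof.
  intros a_ge0 a_decr Hk im0.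
  assert (c0 : cos (- INR 0 * k) = 1) by (rewrite INR_0, Ropp_0, Rmult_0_l; apply cos_0).
  assert (abel := abel_summation_lower_bound a (fun n => cos (- INR n * k)) N
                    c0 (fun n => proj2 (COS_bound _)) a_ge0 a_decr).
  cbv beta in abel. rewrite trig_re_shift_diff, im0 in abel.
  assert (0 <= a N * (1 - cos (- INR (S N) * k))).
  { apply Rmult_le_pos; [apply a_ge0 | pose proof (COS_bound (- INR (S N) * k)); lra]. }
  destruct (Req_dec (cos k) 1) as [cos1 | cos_ne1].
  - rewrite (cos_eq_1_segment k Hk cos1). unfold trig_re.
    rewrite sum_n_Reals. apply cond_pos_sum. intros n.
    rewrite Rmult_0_r, cos_0, Rmult_1_r. apply a_ge0.
  - pose proof (COS_bound k). nra.
Qed.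

Lemma Cmod_add_Re_pos (z : C) : z <> RtoC 0 -> (Im z = 0 -> 0 <= Re z) -> 0 < Cmod z + Re z.
Proof.
  intros z_ne0 real_nonneg.
  assert (mod_ge0 := Cmod_ge_0 z). assert (mod2 := Cmod2_alt z).
  destruct (Req_dec (Im z) 0) as [im0 | im_ne0].
  - assert (Re z <> 0) by (intros re0; apply z_ne0; destruct z; simpl in *; now rewrite re0, im0).
    specialize (real_nonneg im0). lra.
  - assert (im2 := Rsqr_pos_lt _ im_ne0). unfold Rsqr in im2. nra.
Qed.

Section TrigPolyWinding.

Variables (a : nat -> R) (N : nat).
Hypothesis a_ge0 : forall n, 0 <= a n.
Hypothesis a_decr : forall n, (n < N)%nat -> a (S n) <= a n.
Hypothesis p_ne0 : forall k, - PI <= k <= PI -> trig_poly a N k <> RtoC 0.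

Lemma is_RInt_trig_poly_log_derivative :
  @is_RInt C_R_CompleteNormedModule (fun k => (trig_poly_deriv a N k / trig_poly a N k)%C)
    (- PI) PI (RtoC 0).
Proof.
  assert (segment : forall t, Rmin (- PI) PI <= t <= Rmax (- PI) PI -> - PI <= t <= PI).
  { pose proof PI_RGT_0. now rewrite Rmin_left, Rmax_right by lra. }
  replace (RtoC 0) with (principal_log (trig_poly a N PI) - principal_log (trig_poly a N (- PI)))%C
    by (rewrite trig_poly_periodic; ring).
  apply (is_RInt_log_derivative (trig_re a N) (trig_im a N)); intros t Ht.
  - apply is_derive_trig_re.
  - apply is_derive_trig_im.
  - apply continuous_trig_im.
  - apply continuous_trig_re.
  - apply (Cmod_add_Re_pos (trig_poly a N t)); [now apply p_ne0, segment |].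
    apply trig_re_nonneg_on_real_axis; auto.
Qed.

End TrigPolyWinding.

Definition column_coeff (T : Z -> Z -> R) (l1 n : nat) : R := T (Z.of_nat n - Z.of_nat l1)%Z 0%Z.

Lemma phase_shift (l1 n : nat) k :
  - k * IZR (Z.of_nat n - Z.of_nat l1) = INR l1 * k + - INR n * k.
Proof. rewrite minus_IZR, <- !INR_IZR_INZ. ring. Qed.

Lemma xi_factor T l1 l2 k :
  xi T l1 l2 k = (expi (INR l1 * k) * trig_poly (column_coeff T l1) (l1 + l2) k)%C.
Proof.
  unfold xi, trig_poly, trig_re, trig_im.
  rewrite (sum_n_ext _ (fun n => mult (expi (INR l1 * k))
     ((column_coeff T l1 n * cos (- INR n * k), column_coeff T l1 n * sin (- INR n * k)) : C))).
  - now rewrite sum_n_mult_l, sum_n_C.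
  - intros n. cbv zeta. rewrite phase_shift, expi_add.
    unfold column_coeff, expi, RtoC, mult; simpl. unfold Cmult; simpl. f_equal; ring.
Qed.

Lemma dxi_factor T l1 l2 k :
  dxi T l1 l2 k =
  (expi (INR l1 * k) * (Ci * RtoC (INR l1) * trig_poly (column_coeff T l1) (l1 + l2) k
                        + trig_poly_deriv (column_coeff T l1) (l1 + l2) k))%C.
Proof.
  unfold dxi, trig_poly, trig_poly_deriv, trig_re, trig_im.
  set (a := column_coeff T l1).
  rewrite (sum_n_ext _ (fun n => mult (expi (INR l1 * k))
     (plus (mult (Ci * RtoC (INR l1))%C ((a n * cos (- INR n * k), a n * sin (- INR n * k)) : C))
           ((INR n * a n * sin (- INR n * k), - (INR n * a n) * cos (- INR n * k)) : C)))).
  - now rewrite sum_n_mult_l, sum_n_plus, sum_n_mult_l, !sum_n_C.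
  - intros n. cbv zeta. rewrite phase_shift, expi_add, minus_IZR, <- !INR_IZR_INZ.
    unfold a, column_coeff, expi, RtoC, Ci, mult, plus; simpl.
    unfold Cmult, Cplus, Copp; simpl. f_equal; ring.
Qed.

Lemma winding_eq_left_range T l1 l2 :
  (forall i j, 0 <= T i j) ->
  (forall k, - PI <= k <= PI -> xi T l1 l2 k <> RtoC 0) ->
  (forall l, (- Z.of_nat l1 <= l < Z.of_nat l2)%Z -> T (l + 1)%Z 0%Z <= T l 0%Z) ->
  winding T l1 l2 = RtoC (INR l1).
Proof.
  intros T_ge0 xi_ne0 T_decr.
  set (a := column_coeff T l1). set (N := (l1 + l2)%nat).
  assert (p_ne0 : forall k, - PI <= k <= PI -> trig_poly a N k <> RtoC 0).
  { intros k Hk p0. apply (xi_ne0 k Hk). rewrite xi_factor. fold a N. rewrite p0. ring. }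
  assert (a_decr : forall n, (n < N)%nat -> a (S n) <= a n).
  { intros n Hn. unfold a, column_coeff.
    replace (Z.of_nat (S n) - Z.of_nat l1)%Z with (Z.of_nat n - Z.of_nat l1 + 1)%Z by lia.
    apply T_decr. lia. }
  assert (log_deriv : forall k, - PI <= k <= PI ->
            (dxi T l1 l2 k / xi T l1 l2 k
             = Ci * RtoC (INR l1) + trig_poly_deriv a N k / trig_poly a N k)%C).
  { intros k Hk. rewrite dxi_factor, xi_factor. fold a N.
    field. split; [now apply p_ne0 | apply expi_neq0]. }
  unfold winding. erewrite is_RInt_unique.
  2:{ apply (is_RInt_ext
               (fun k => Ci * RtoC (INR l1) + trig_poly_deriv a N k / trig_poly a N k)%C).
      - intros k Hk. rewrite Rmin_left, Rmax_right in Hk by (pose proof PI_RGT_0; lra).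
        symmetry. apply log_deriv. lra.
      - apply (is_RInt_plus (V := C_R_NormedModule) (fun _ => Ci * RtoC (INR l1))%C
                 (fun k => trig_poly_deriv a N k / trig_poly a N k)%C).
        + apply is_RInt_const.
        + apply is_RInt_trig_poly_log_derivative; auto. intros n. apply T_ge0. }
  pose proof PI_RGT_0.
  unfold Cdiv, Cinv, Cmult, RtoC, Ci. cbn -[PI INR].
  f_equal; field; lra.
Qed.

Lemma strictly_finite_ranged_left0 T l1 l2 :
  strictly_finite_ranged T l1 l2 -> (forall j l, (l < 0)%Z -> T (j + l)%Z j = 0) -> l1 = 0%nat.
Proof.
  intros [_ [_ [left_ne0 _]]] no_left. destruct l1 as [| l1]; [easy | exfalso].
  apply (left_ne0 0%Z). rewrite <- Z.add_opp_r. apply no_left. lia.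
Qed.

Theorem mainTheorem5 :
  (forall (T : Z -> Z -> R) (l1 l2 : nat),
      stochastic T ->
      translation_invariant T ->
      strictly_finite_ranged T l1 l2 ->
      (forall k, - PI <= k <= PI -> xi T l1 l2 k <> RtoC 0) ->
      (forall j l, (- Z.of_nat l1 <= l < Z.of_nat l2)%Z ->
          T (j + l + 1)%Z j <= T (j + l)%Z j) ->
      winding T l1 l2 = RtoC (INR l1))
  /\
  (forall (T : Z -> Z -> R) (l1 l2 : nat),
      stochastic T ->
      translation_invariant T ->
      strictly_finite_ranged T l1 l2 ->
      (forall k, - PI <= k <= PI -> xi T l1 l2 k <> RtoC 0) ->
      (forall j l, (l < 0)%Z -> T (j + l)%Z j = 0) ->
      (forall j l, (0 <= l < Z.of_nat l2)%Z ->
          T (j + l + 1)%Z j <= T (j + l)%Z j) ->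
      winding T l1 l2 = RtoC 0).
Proof.
  split.
  - intros T l1 l2 [T_ge0 _] _ _ xi_ne0 T_decr.
    apply winding_eq_left_range; [easy | easy |].
    intros l Hl. exact (T_decr 0%Z l Hl).
  - intros T l1 l2 [T_ge0 _] _ T_range xi_ne0 no_left T_decr.
    assert (l1_0 := strictly_finite_ranged_left0 T l1 l2 T_range no_left). subst l1.
    rewrite <- INR_0. apply winding_eq_left_range; [easy | easy |].
    intros l Hl. apply (T_decr 0%Z l). lia.
Qed.
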